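(* Consider a single positioning infrastructure with $N_{\text{anc}}$ anchors providing ranging information, of which $N_{\text{adv}}$ are manipulated by an uncoordinated attacker, and let $N_{\text{min}}$ be the minimum number of anchors required for positioning. Suppose that $N_{\text{anc}}-N_{\text{adv}}\ge N_{\text{min}}$. Then uncoordinated spoofing can be detected, i.e., there is at least one benign subset position estimate, and it is almost surely inconsistent with the spoofed position estimates.
   Context: Idealized model of subset-based integrity monitoring: a platform at unknown true position $\mathbf{p}_{\text{usr}}(t)\in\mathbb{R}^3$ receives ranging measurements from anchors with known positions (e.g., GNSS satellites, for which $N_{\text{min}}=4$). For every subset of anchors of size at least $N_{\text{min}}$, a position estimate is computed by multilateration. Positioning noise and uncertainties are taken to be negligible (zero) while attacker-induced deviations are preserved, and the anchor geometry is good, so every subset consisting only of benign measurements of size at least $N_{\text{min}}$ yields exactly $\mathbf{p}_{\text{usr}}(t)$. ''Uncoordinated spoofing'' means the manipulated ranging values are chosen independently (potentially randomly), so estimates from subsets involving manipulated measurements are random positions. *)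

From HB Require Import structures.
From mathcomp Require Import all_boot all_order all_algebra.
From mathcomp Require Import all_classical all_reals all_analysis.
Set Implicit Arguments. Unset Strict Implicit. Unset Printing Implicit Defensive.

Definition benign_subset (Nanc : nat) (adv S : {set 'I_Nanc}) : bool :=
  S :&: adv == finset.set0.

Definition usable_subset (Nanc Nmin : nat) (S : {set 'I_Nanc}) : bool :=
  Nmin <= #|S|.

(* The complement of the manipulated anchors is a usable benign subset, so in
   the idealised model its estimate is exactly the true position p_usr.  A
   spoofed estimate can agree with it only on the event that this estimate
   hits the single point p_usr, which has probability zero because spoofed
   estimates have no atoms; as there are only finitely many subsets, the union
   of these events is still a null event. *)

From HB Require Import structures.
From mathcomp Require Import all_boot all_order all_algebra.
From mathcomp Require Import all_classical all_reals all_analysis.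
From mathcomp Require Import zify.

Set Implicit Arguments.
Unset Strict Implicit.
Unset Printing Implicit Defensive.

Local Open Scope classical_set_scope.
Local Open Scope ring_scope.

Section finite_union_of_null_sets.
Context d (T : ringOfSetsType d) (R : realFieldType).
Variable mu : {content set T -> \bar R}.

Lemma measure_fin_bigcup_null (I : finType) (P : pred I) (F : I -> set T) :
  (forall i, P i -> measurable (F i) /\ mu (F i) = 0%E) ->
  mu (\bigcup_(i in [set i | P i]) F i) = 0%E.
Proof.
move=> null_F.
have -> : \bigcup_(i in [set i | P i]) F i = \big[setU/set0]_(i <- enum I | P i) F i.
  by rewrite -bigcup_seq_cond; congr (\bigcup_(i in mkset _) _);
    apply/funext => i; rewrite mem_enum.
apply: measure_negligible.
  by apply: bigsetU_measurable => i /null_F[].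
elim/big_ind: _ => [|A B|i /null_F[mFi Fi0]].
- exact: negligible_set0.
- exact: negligibleU.
- exact/negligibleP.
Qed.

End finite_union_of_null_sets.

Lemma benign_setC (Nanc : nat) (adv : {set 'I_Nanc}) : benign_subset adv (~: adv).
Proof. by rewrite /benign_subset finset.setIC finset.setICr. Qed.

Lemma usable_setC (Nanc Nmin : nat) (adv : {set 'I_Nanc}) :
  (Nmin <= Nanc - #|adv|)%N -> usable_subset Nmin (~: adv).
Proof. by rewrite /usable_subset; have := cardsC adv; rewrite card_ord; lia. Qed.

Theorem proposition1 (R : realType) (d : measure_display) (Omega : measurableType d)
  (P : probability Omega R) (Nanc Nadv Nmin : nat) (adv : {set 'I_Nanc})
  (p_usr : 'rV[R]_3) (est : {set 'I_Nanc} -> Omega -> 'rV[R]_3) :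
  #|adv| = Nadv ->
  (* idealized model: every usable benign subset yields exactly p_usr *)
  (forall S, usable_subset Nmin S -> benign_subset adv S ->
     forall w, est S w = p_usr) ->
  (* uncoordinated spoofing: estimates of usable subsets involving manipulated
     anchors are random positions whose distribution has no atoms *)
  (forall S, usable_subset Nmin S -> ~~ benign_subset adv S ->
     forall x : 'rV[R]_3,
       measurable [set w | est S w = x] /\ P [set w | est S w = x] = 0%E) ->
  (Nmin <= Nanc - Nadv)%N ->
  exists Sb : {set 'I_Nanc},
    usable_subset Nmin Sb /\ benign_subset adv Sb /\
    P [set w | exists S, usable_subset Nmin S /\ ~~ benign_subset adv S /\
                         est S w = est Sb w] = 0%E.
Proof.
move=> <- benign_exact spoofed_atomless enough_benign.
have usable_Sb := usable_setC enough_benign.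
have benign_Sb := benign_setC adv.
exists (~: adv); split => //; split => //.
have -> : [set w | exists S, usable_subset Nmin S /\ ~~ benign_subset adv S /\
                             est S w = est (~: adv) w] =
    \bigcup_(S in [set S | usable_subset Nmin S && ~~ benign_subset adv S])
      [set w | est S w = p_usr].
  apply/seteqP; split => w /=.
  - move=> [S [uS [bS eS]]]; exists S; first by rewrite /= uS bS.
    by rewrite /= eS (benign_exact _ usable_Sb benign_Sb).
  - move=> [S /= /andP[uS bS] eS]; exists S; split => //; split => //.
    by rewrite eS (benign_exact _ usable_Sb benign_Sb).
apply: measure_fin_bigcup_null => S /andP[uS bS].
exact: spoofed_atomless.
Qed.
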